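(* Let $A, B, C$ be sets, each equipped with a set of predicates $\mathbf{P}(A)\subseteq\mathcal{P}(A)\setminus\{\varnothing\}$ (similarly $\mathbf{P}(B)$, $\mathbf{P}(C)$) of non-empty subsets. Let $R_{ab} \subseteq A\times B$ and $R_{bc}\subseteq B\times C$ be relations, and for $p \subseteq C$ let $\boxplus_{bc} p = \{ y \in B \mid R_{bc}(y) = p\}$, where $R_{bc}(y) = \{z \in C \mid R_{bc}(y,z)\}$. Suppose that: (1) $R_{ab}$ is belief-complete with respect to $\mathbf{P}(B)$; (2) $R_{bc}$ is assumption-complete with respect to $\mathbf{P}(C)$; (3) for each $p \in \mathbf{P}(C)$, $\boxplus_{bc}p \in \mathbf{P}(B)$. Then the relational composite $R_{ac} = R_{ab};R_{bc} \subseteq A \times C$, given by $R_{ac}(x,z) \iff \exists y\in B.\,[R_{ab}(x,y)\wedge R_{bc}(y,z)]$, is assumption-complete with respect to $\mathbf{P}(C)$.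
   Context: A relation $R \subseteq X \times Y$ is assumption-complete with respect to $\mathbf{P}(Y)$ if for every $p \in \mathbf{P}(Y)$ there is $x \in X$ such that for all $y \in Y$: $R(x,y) \iff y \in p$. It is belief-complete with respect to $\mathbf{P}(Y)$ if for every $p \in \mathbf{P}(Y)$ there is $x \in X$ such that for all $y\in Y$, $R(x,y) \Rightarrow y \in p$, and moreover there exists $y$ with $R(x,y)$. *)

Definition assumption_complete {X Y : Type} (R : X -> Y -> Prop)
  (PY : (Y -> Prop) -> Prop) : Prop :=
  forall p, PY p -> exists x : X, forall y : Y, R x y <-> p y.

Definition belief_complete {X Y : Type} (R : X -> Y -> Prop)
  (PY : (Y -> Prop) -> Prop) : Prop :=
  forall p, PY p -> exists x : X,
    (forall y : Y, R x y -> p y) /\ (exists y : Y, R x y).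

(* boxplus_bc p = { y in B | R_bc(y) = p } (equality of subsets of C). *)
Definition boxplus {B C : Type} (Rbc : B -> C -> Prop) (p : C -> Prop) : B -> Prop :=
  fun y => forall z : C, Rbc y z <-> p z.

Definition rcomp {A B C : Type} (Rab : A -> B -> Prop) (Rbc : B -> C -> Prop)
  : A -> C -> Prop :=
  fun x z => exists y : B, Rab x y /\ Rbc y z.

Definition nonempty_preds {X : Type} (PX : (X -> Prop) -> Prop) : Prop :=
  forall p, PX p -> exists x : X, p x.


(* An [a] whose nonempty set of successors lies inside [boxplus Rbc p] sees, through
   the composite, exactly [p]: each of its successors already sees exactly [p].
   Hence only hypotheses (1) and (3) are needed; the others are unused. *)

Lemma rcomp_boxplus {A B C : Type} (Rab : A -> B -> Prop) (Rbc : B -> C -> Prop)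
  (p : C -> Prop) (a : A) :
  (forall b, Rab a b -> boxplus Rbc p b) -> (exists b, Rab a b) ->
  forall c, rcomp Rab Rbc a c <-> p c.
Proof.
  intros Hsub [b0 Hab0] c; split.
  - intros [b [Hab Hbc]]. exact (proj1 (Hsub b Hab c) Hbc).
  - intros Hc. exists b0. split; [exact Hab0 | exact (proj2 (Hsub b0 Hab0 c) Hc)].
Qed.

Lemma rcomp_assumption_complete {A B C : Type} (PB : (B -> Prop) -> Prop)
  (PC : (C -> Prop) -> Prop) (Rab : A -> B -> Prop) (Rbc : B -> C -> Prop) :
  belief_complete Rab PB -> (forall p, PC p -> PB (boxplus Rbc p)) ->
  assumption_complete (rcomp Rab Rbc) PC.
Proof.
  intros Hbel Hbox p Hp.
  destruct (Hbel _ (Hbox p Hp)) as [a [Hsub Hne]].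
  exists a. exact (rcomp_boxplus Rab Rbc p a Hsub Hne).
Qed.

Theorem lemma9 (A B C : Type)
  (PA : (A -> Prop) -> Prop) (PB : (B -> Prop) -> Prop) (PC : (C -> Prop) -> Prop)
  (hPA : nonempty_preds PA) (hPB : nonempty_preds PB) (hPC : nonempty_preds PC)
  (Rab : A -> B -> Prop) (Rbc : B -> C -> Prop)
  (h1 : belief_complete Rab PB)
  (h2 : assumption_complete Rbc PC)
  (h3 : forall p, PC p -> PB (boxplus Rbc p)) :
  assumption_complete (rcomp Rab Rbc) PC.
Proof. exact (rcomp_assumption_complete PB PC Rab Rbc h1 h3). Qed.
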